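(* Let $p,q$ be distinct sentential variables and let $\pi$ be any weighting function. For each of the following items, there exist a $\pi$-based selection function $\sigma$ and a $\Delta$ model $M$ with selection function $\sigma$ witnessing failure, namely: for items given as ''$\varphi$ does not imply $\psi$'', some world lies in $[\![\varphi]\!]_M\setminus[\![\psi]\!]_M$; for the item given as ''$\psi$ is not valid'', some world lies outside $[\![\psi]\!]_M$. (a) $\mathbb{P}p\wedge\mathbb{P}q$ does not imply $\mathbb{P}(p\wedge q)$; (b) $\mathbb{O}(p\vee q)$ does not imply $\mathbb{O}p\vee\mathbb{O}q$; (c) $p\rightarrow q$ does not imply $\mathbb{O}p\rightarrow\mathbb{O}q$; (d) $\mathbb{O}p$ does not imply $\mathbb{O}(p\wedge q)$; (e) $\mathbb{P}p$ does not imply $\mathbb{P}(p\wedge q)$; (f) $\mathbb{C}(p,q)\vee\mathbb{C}(q,p)$ is not valid; (g) $\mathbb{O}(p\vee q)$ does not imply $\mathbb{O}p$; (h) $\mathbb{O}p$ does not imply $p$; (i) $\mathbb{P}p$ does not imply $\mathbb{P}\mathbb{O}p$; (j) $(\neg q\succ\neg p)\wedge\mathbb{O}p$ does not imply $\mathbb{O}q$.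
   Context: Fix a set $\mathrm{PROPS}$ of sentential variables (containing $p,q$). The language $\mathcal{L}$: every $v\in\mathrm{PROPS}$ is a formula; if $\varphi,\psi$ are formulas so are $\neg\varphi$, $(\varphi\wedge\psi)$, $(\varphi\succeq\psi)$. Abbreviations: $\vee,\rightarrow,\leftrightarrow$ as usual; $\varphi\succ\psi := (\varphi\succeq\psi)\wedge\neg(\psi\succeq\varphi)$; $\top := (v_0\rightarrow v_0)$ for a fixed variable $v_0$. Deontic operators: $\mathbb{C}(\varphi,\psi) := (\varphi\wedge\psi)\succ(\varphi\wedge\neg\psi)$; $\mathbb{O}\psi := \mathbb{C}(\top,\psi)$; $\mathbb{P}\psi:=\neg\mathbb{O}\neg\psi$. A model is $M=(W,\sigma,u,t)$ with $W$ a nonempty set, $\sigma:W\times\{A\subseteq W:A\ne\emptyset\}\to W$ with $\sigma(w,A)\in A$, $u:W\to\mathbb{R}$, and $t:\mathrm{PROPS}\to\mathcal{P}(W)$. Semantics: $[\![v]\!]_M=t(v)$; $[\![\neg\theta]\!]_M=W\setminus[\![\theta]\!]_M$; $[\![\theta\wedge\psi]\!]_M=[\![\theta]\!]_M\cap[\![\psi]\!]_M$; $[\![\theta\succeq\psi]\!]_M=\emptyset$ if either $[\![\theta]\!]_M$ or $[\![\psi]\!]_M$ is empty, otherwise $\{w: u(\sigma(w,[\![\theta]\!]_M))\ge u(\sigma(w,[\![\psi]\!]_M))\}$. A $\Delta$ model is a model with $W=\mathcal{P}(\mathrm{PROPS})$, $t(v)=\{w: v\in w\}$ for all $v$, and $\sigma$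 $\Delta$-based: for all $w_0$ and nonempty $A$ there is no $w_1\in A$ with $w_0\triangle w_1\subsetneq w_0\triangle\sigma(w_0,A)$ ($\triangle$ = symmetric difference); $u$ is arbitrary. A weighting function is a map $\pi:\mathrm{PROPS}\to(0,\infty)$. For worlds $w_0,w_1$, $d_\pi(w_0,w_1):=\sum_{v\in w_0\triangle w_1}\pi(v)$. A selection function $\sigma$ (on $W=\mathcal{P}(\mathrm{PROPS})$) is $\pi$-based if for every $w\in W$ and nonempty $A\subseteq W$ there is no $w'\in A$ with $d_\pi(w,w')<d_\pi(w,\sigma(w,A))$. *)

From mathcomp Require Import all_boot all_order all_algebra.
From mathcomp Require Import reals.
Set Implicit Arguments. Unset Strict Implicit. Unset Printing Implicit Defensive.
Import Order.TTheory GRing.Theory Num.Theory.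
Local Open Scope ring_scope.

Section Logic.
Variable PROPS : finType.

Inductive form : Type :=
| Var : PROPS -> form
| Neg : form -> form
| And : form -> form -> form
| Pref : form -> form -> form.

Definition Or (a b : form) := Neg (And (Neg a) (Neg b)).
Definition Imp (a b : form) := Or (Neg a) b.
Definition Iff (a b : form) := And (Imp a b) (Imp b a).
Definition Strict (a b : form) := And (Pref a b) (Neg (Pref b a)).
Definition Top (v0 : PROPS) := Imp (Var v0) (Var v0).
Definition Cond (v0 : PROPS) (a b : form) :=
  Strict (And a b) (And a (Neg b)).
Definition Obl (v0 : PROPS) (b : form) := Cond v0 (Top v0) b.
Definition Perm (v0 : PROPS) (b : form) := Neg (Obl v0 (Neg b)).

Definition world := {set PROPS}.
Definition selfun := world -> {set world} -> world.

Definition is_selection (sigma : selfun) : Prop :=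
  forall (w : world) (A : {set world}), A != set0 -> sigma w A \in A.

Definition symdiff (a b : world) : world := (a :\: b) :|: (b :\: a).

Definition delta_based (sigma : selfun) : Prop :=
  forall (w0 : world) (A : {set world}), A != set0 ->
    ~ (exists2 w1, w1 \in A & symdiff w0 w1 \proper symdiff w0 (sigma w0 A)).

Variable R : realType.

Definition weighting (pi : PROPS -> R) : Prop := forall v, 0 < pi v.

Definition dist (pi : PROPS -> R) (w0 w1 : world) : R :=
  \sum_(v in symdiff w0 w1) pi v.

Definition pi_based (pi : PROPS -> R) (sigma : selfun) : Prop :=
  forall (w : world) (A : {set world}), A != set0 ->
    ~ (exists2 w', w' \in A & dist pi w w' < dist pi w (sigma w A)).

(* Semantics in the Delta model (W, sigma, u, t) with t v = {w | v \in w}. *)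
Fixpoint eval (sigma : selfun) (u : world -> R) (f : form) : {set world} :=
  match f with
  | Var v => [set w : world | v \in w]
  | Neg a => ~: eval sigma u a
  | And a b => eval sigma u a :&: eval sigma u b
  | Pref a b =>
      let A := eval sigma u a in
      let B := eval sigma u b in
      if (A == set0) || (B == set0) then set0
      else [set w : world | u (sigma w B) <= u (sigma w A)]
  end.

Definition fails_implication (pi : PROPS -> R) (phi psi : form) : Prop :=
  exists sigma : selfun,
    [/\ is_selection sigma, delta_based sigma & pi_based pi sigma] /\
    exists (u : world -> R) (w : world),
      w \in eval sigma u phi /\ w \notin eval sigma u psi.

Definition fails_validity (pi : PROPS -> R) (psi : form) : Prop :=
  exists sigma : selfun,
    [/\ is_selection sigma, delta_based sigma & pi_based pi sigma] /\
    exists (u : world -> R) (w : world), w \notin eval sigma u psi.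

End Logic.

(* All countermodels share one selection function: the world nearest to w in
   pi-distance. Since the weights are positive, a nearest world is also minimal
   for inclusion of symmetric differences, so the selection is Delta-based too.
   On a set of worlds fixing finitely many literals the nearest world is w with
   those literals forced, which makes every selection in the formulas below
   computable. Utilities are then chosen per item: u(p & ~q) = 1, u(p & q) = -1
   and 0 elsewhere refutes (a), (c)-(e) and (j); the indicator of p \/ q
   refutes (b), (g) and (i); the indicator of p makes O p hold everywhere,
   refuting (h); and under a constant utility no strict preference holds,
   refuting (f). *)

From mathcomp Require Import all_boot all_order all_algebra.
From mathcomp Require Import reals lra.
Set Implicit Arguments. Unset Strict Implicit. Unset Printing Implicit Defensive.
Import Order.TTheory GRing.Theory Num.Theory.
Local Open Scope ring_scope.

Section Worlds.
Variable PROPS : finType.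

Lemma symdiff_inj (w : world PROPS) : injective (symdiff w).
Proof.
move=> x y /setP xy; apply/setP => v; move: (xy v); rewrite !inE.
by case: (v \in w); case: (v \in x); case: (v \in y).
Qed.

Definition cube (P N : {set PROPS}) : {set world PROPS} :=
  [set y : world PROPS | (P \subset y) && (y \subset ~: N)].

Lemma cube_neq0 (P N : {set PROPS}) : P \subset ~: N -> cube P N != set0.
Proof. by move=> PN; apply/set0Pn; exists P; rewrite inE subxx. Qed.

End Worlds.

Section Semantics.
Variables (R : realType) (PROPS : finType) (sg : selfun PROPS) (u : world PROPS -> R).

Lemma in_var a w : (w \in eval sg u (Var a)) = (a \in w).
Proof. by rewrite [LHS]inE. Qed.

Lemma in_and a b w :
  (w \in eval sg u (And a b)) = (w \in eval sg u a) && (w \in eval sg u b).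
Proof. by rewrite [LHS]inE. Qed.

Lemma in_or a b w :
  (w \in eval sg u (Or a b)) = (w \in eval sg u a) || (w \in eval sg u b).
Proof. by rewrite /Or /= !inE negb_and !negbK. Qed.

Lemma in_imp a b w :
  (w \in eval sg u (Imp a b)) = (w \notin eval sg u a) || (w \in eval sg u b).
Proof. by rewrite /Imp in_or /= inE. Qed.

Lemma in_strict a b w : (w \in eval sg u (Strict a b)) =
  [&& eval sg u a != set0, eval sg u b != set0 &
      u (sg w (eval sg u b)) < u (sg w (eval sg u a))].
Proof.
rewrite /Strict /= !inE.
case: (eval sg u a == set0); case: (eval sg u b == set0); rewrite /= ?inE //.
by rewrite -ltNge andb_idl // => /ltW.
Qed.

Lemma notin_strict_const a b w :
  (forall x y, u x = u y) -> w \notin eval sg u (Strict a b).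
Proof.
move=> u_const; rewrite in_strict (u_const (sg w (eval sg u b)) (sg w (eval sg u a))).
by rewrite ltxx !andbF.
Qed.

Lemma eval_top v0 : eval sg u (Top v0) = setT.
Proof. by apply/setP => w; rewrite /= !inE; case: (v0 \in w). Qed.

Lemma in_obl v0 b w : (w \in eval sg u (Obl v0 b)) =
  [&& eval sg u b != set0, eval sg u (Neg b) != set0 &
      u (sg w (eval sg u (Neg b))) < u (sg w (eval sg u b))].
Proof.
have top_and c : eval sg u (And (Top v0) c) = eval sg u c.
  change (eval sg u (Top v0) :&: eval sg u c = eval sg u c).
  by rewrite eval_top setTI.
by rewrite /Obl /Cond in_strict !top_and.
Qed.

Lemma in_perm v0 b w : (w \in eval sg u (Perm v0 b)) =
  ~~ [&& eval sg u (Neg b) != set0, eval sg u b != set0 &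
         u (sg w (eval sg u b)) < u (sg w (eval sg u (Neg b)))].
Proof.
have nnb : eval sg u (Neg (Neg b)) = eval sg u b by exact: setCK.
by rewrite -[LHS]/(w \in ~: eval sg u (Obl v0 (Neg b))) in_setC in_obl nnb.
Qed.

Lemma obl_of_indicator v0 b w : is_selection sg ->
  (forall y, u y = (y \in eval sg u b)%:R) ->
  eval sg u b != set0 -> eval sg u (Neg b) != set0 ->
  w \in eval sg u (Obl v0 b).
Proof.
move=> sg_sel u_ind b0 nb0; rewrite in_obl b0 nb0 !u_ind.
have := sg_sel w _ nb0; rewrite [in X in X -> _]inE => /negbTE ->.
by rewrite (sg_sel w _ b0) ltr01.
Qed.

Lemma eval_var a : eval sg u (Var a) = cube [set a] set0.
Proof. by apply/setP => y; rewrite !inE sub1set setC0 subsetT andbT. Qed.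

Lemma eval_negvar a : eval sg u (Neg (Var a)) = cube set0 [set a].
Proof. by apply/setP => y; rewrite !inE sub0set -setTD subsetD1 subsetT. Qed.

Lemma eval_andvar a b : eval sg u (And (Var a) (Var b)) = cube [set a; b] set0.
Proof. by apply/setP => y; rewrite !inE subUset !sub1set setC0 subsetT andbT. Qed.

Lemma var_neq0 a : eval sg u (Var a) != set0.
Proof. by rewrite eval_var cube_neq0 // setC0 subsetT. Qed.

Lemma negvar_neq0 a : eval sg u (Neg (Var a)) != set0.
Proof. by rewrite eval_negvar cube_neq0 // sub0set. Qed.

Lemma andvar_neq0 a b : eval sg u (And (Var a) (Var b)) != set0.
Proof. by rewrite eval_andvar cube_neq0 // setC0 subsetT. Qed.

Lemma set0_in_nand a b : set0 \in eval sg u (Neg (And (Var a) (Var b))).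
Proof. by rewrite /= !inE. Qed.

End Semantics.

Section ClosestSelection.
Variables (R : realType) (PROPS : finType) (pi : PROPS -> R).
Hypothesis pi_gt0 : weighting pi.

Definition closest : selfun PROPS := fun w A =>
  if [pick x in A] is Some x0 then Order.arg_min x0 (mem A) (dist pi w) else w.

Lemma closestP w A : A != set0 ->
  closest w A \in A /\ forall y, y \in A -> dist pi w (closest w A) <= dist pi w y.
Proof.
rewrite /closest; case: pickP => [x0 Ax0 _ | A0]; first by case: arg_minP.
by case/set0Pn => x; rewrite A0.
Qed.

Lemma dist_lt_proper w x y :
  symdiff w x \proper symdiff w y -> dist pi w x < dist pi w y.
Proof.
case/properP => sub_xy [v vy vNx].
rewrite /dist [X in _ < X](big_setID (symdiff w x)) /= (setIidPr sub_xy) ltrDl.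
rewrite (bigD1 v) /=; last by rewrite in_setD vy vNx.
rewrite ltr_pwDl ?pi_gt0 //; apply: sumr_ge0 => i _; exact/ltW/pi_gt0.
Qed.

Lemma closest_ok :
  [/\ is_selection closest, delta_based closest & pi_based pi closest].
Proof.
split=> w A A0; have [sel_in sel_min] := closestP w A0 => //.
  by case=> y /sel_min; rewrite leNgt => /negP + /dist_lt_proper.
by case=> y /sel_min; rewrite leNgt => /negP.
Qed.

Lemma closest_eq w (A : {set world PROPS}) x : x \in A ->
  (forall y, y \in A -> symdiff w x \subset symdiff w y) -> closest w A = x.
Proof.
move=> Ax x_min; have A0 : A != set0 by apply/set0Pn; exists x.
have [/x_min sub_x c_min] := closestP w A0.
case: (eqVneq (closest w A) x) => // neq.
have /dist_lt_proper : symdiff w x \proper symdiff w (closest w A).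
  by rewrite properEneq sub_x andbT (inj_eq (@symdiff_inj _ w)) eq_sym.
by rewrite ltNge c_min.
Qed.

Lemma closest_id w (A : {set world PROPS}) : w \in A -> closest w A = w.
Proof.
move=> Aw; apply: closest_eq => // y _; apply/subsetP => v.
by rewrite !inE andNb.
Qed.

Lemma closest_cube w (P N : {set PROPS}) : P \subset ~: N ->
  closest w (cube P N) = (w :|: P) :\: N.
Proof.
move=> PN; apply: closest_eq => [|y].
  by rewrite inE subsetD subsetUr disjoints_subset PN subsetDr.
rewrite inE => /andP[/subsetP Py /subsetP yN]; apply/subsetP => v.
move: (Py v) (yN v); rewrite !inE.
by case: (v \in w); case: (v \in P); case: (v \in N); case: (v \in y) => //; auto.
Qed.

Lemma closest_var (sg : selfun PROPS) (u : world PROPS -> R) w a :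
  closest w (eval sg u (Var a)) = w :|: [set a].
Proof. by rewrite eval_var closest_cube ?setD0 // setC0 subsetT. Qed.

Lemma closest_negvar (sg : selfun PROPS) (u : world PROPS -> R) w a :
  closest w (eval sg u (Neg (Var a))) = w :\ a.
Proof. by rewrite eval_negvar closest_cube ?setU0 // sub0set. Qed.

Lemma closest_andvar (sg : selfun PROPS) (u : world PROPS -> R) w a b :
  closest w (eval sg u (And (Var a) (Var b))) = w :|: [set a; b].
Proof. by rewrite eval_andvar closest_cube ?setD0 // setC0 subsetT. Qed.

Lemma fails_implication_closest (u : world PROPS -> R) w phi psi :
  w \in eval closest u phi -> w \notin eval closest u psi ->
  fails_implication pi phi psi.
Proof. by move=> ? ?; exists closest; split; [exact: closest_ok | exists u, w]. Qed.

Lemma fails_validity_closest (u : world PROPS -> R) w psi :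
  w \notin eval closest u psi -> fails_validity pi psi.
Proof. by move=> ?; exists closest; split; [exact: closest_ok | exists u, w]. Qed.

Section Countermodels.
Variables (v0 p q : PROPS).
Hypothesis qp : q != p.

Definition penalty (y : world PROPS) : R :=
  if p \in y then (if q \in y then -1 else 1) else 0.

Lemma penalty_in_obl_p w : (w \in eval closest penalty (Obl v0 (Var p))) = (q \notin w).
Proof.
rewrite in_obl var_neq0 negvar_neq0 closest_var closest_negvar /penalty !inE.
by rewrite eqxx (negbTE qp) /= orbT orbF; case: (q \in w); lra.
Qed.

Lemma penalty_notin_obl_q w : w \notin eval closest penalty (Obl v0 (Var q)).
Proof.
rewrite in_obl var_neq0 negvar_neq0 closest_var closest_negvar /penalty !inE.
by rewrite eqxx [p == q]eq_sym (negbTE qp) /= orbT orbF; case: (p \in w); lra.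
Qed.

Lemma penalty_in_perm_p w : (w \in eval closest penalty (Perm v0 (Var p))) = (q \notin w).
Proof.
rewrite in_perm var_neq0 negvar_neq0 closest_var closest_negvar /penalty !inE.
by rewrite eqxx (negbTE qp) /= orbT orbF; case: (q \in w); lra.
Qed.

Lemma penalty_in_perm_q w : (w \in eval closest penalty (Perm v0 (Var q))) = (p \notin w).
Proof.
rewrite in_perm var_neq0 negvar_neq0 closest_var closest_negvar /penalty !inE.
by rewrite eqxx [p == q]eq_sym (negbTE qp) /= orbT orbF; case: (p \in w); lra.
Qed.

Lemma penalty_in_pref_negq_negp w :
  (w \in eval closest penalty (Strict (Neg (Var q)) (Neg (Var p)))) = (p \in w).
Proof.
rewrite in_strict !negvar_neq0 !closest_negvar /penalty !inE.
by rewrite !eqxx [p == q]eq_sym qp /=; case: (p \in w); rewrite ?ltr01 ?ltxx.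
Qed.

Lemma penalty_closest_nand :
  closest set0 (eval closest penalty (Neg (And (Var p) (Var q)))) = set0.
Proof. exact/closest_id/set0_in_nand. Qed.

Lemma penalty_notin_obl_and :
  set0 \notin eval closest penalty (Obl v0 (And (Var p) (Var q))).
Proof.
rewrite in_obl penalty_closest_nand closest_andvar /penalty !inE !eqxx ?orbT.
by rewrite ltr0N1 !andbF.
Qed.

Lemma penalty_notin_perm_and :
  set0 \notin eval closest penalty (Perm v0 (And (Var p) (Var q))).
Proof.
rewrite in_perm penalty_closest_nand closest_andvar andvar_neq0 /penalty !inE !eqxx ?orbT.
by rewrite ltrN10 !andbT negbK; apply/set0Pn; exists set0; apply: set0_in_nand.
Qed.

Section EitherIndicator.
Variables (a b : PROPS).
Hypothesis ba : b != a.
Variable u : world PROPS -> R.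
Hypothesis u_def : forall y, u y = ((a \in y) || (b \in y))%:R.

Lemma indicator_in_obl_or w : w \in eval closest u (Obl v0 (Or (Var a) (Var b))).
Proof.
apply: obl_of_indicator; first by case: closest_ok.
- by move=> y; rewrite u_def in_or !inE.
- by apply/set0Pn; exists [set a]; rewrite in_or !inE eqxx.
- by apply/set0Pn; exists set0; rewrite /= !inE.
Qed.

Lemma indicator_in_obl_var w : (w \in eval closest u (Obl v0 (Var a))) = (b \notin w).
Proof.
rewrite in_obl var_neq0 negvar_neq0 closest_var closest_negvar !u_def !inE.
by rewrite eqxx (negbTE ba) /= orbT; case: (b \in w); rewrite ?ltxx ?ltr01.
Qed.

Lemma indicator_in_perm_var w : w \in eval closest u (Perm v0 (Var a)).
Proof.
rewrite in_perm var_neq0 negvar_neq0 closest_var closest_negvar !u_def !inE.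
by rewrite eqxx (negbTE ba) /= orbT; case: (b \in w); rewrite ?ltxx ?ltr10.
Qed.

Lemma indicator_notin_perm_obl : set0 \notin eval closest u (Perm v0 (Obl v0 (Var a))).
Proof.
have E : eval closest u (Obl v0 (Var a)) = eval closest u (Neg (Var b)).
  by apply/setP => y; rewrite indicator_in_obl_var /= !inE.
have EN : eval closest u (Neg (Obl v0 (Var a))) = eval closest u (Var b).
  by rewrite -[LHS]/(~: eval closest u (Obl v0 (Var a))) E; exact: setCK.
rewrite in_perm EN E var_neq0 negvar_neq0 closest_var closest_negvar !u_def !inE.
by rewrite eqxx [a == b]eq_sym (negbTE ba) ltr01.
Qed.

End EitherIndicator.

Definition either (y : world PROPS) : R := ((p \in y) || (q \in y))%:R.

Lemma fails_perm_conj : fails_implication pi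
  (And (Perm v0 (Var p)) (Perm v0 (Var q))) (Perm v0 (And (Var p) (Var q))).
Proof.
apply: (@fails_implication_closest penalty set0); last exact: penalty_notin_perm_and.
rewrite in_and; apply/andP; split.
- by rewrite penalty_in_perm_p inE.
- by rewrite penalty_in_perm_q inE.
Qed.

Lemma fails_obl_or_split : fails_implication pi
  (Obl v0 (Or (Var p) (Var q))) (Or (Obl v0 (Var p)) (Obl v0 (Var q))).
Proof.
have pq : p != q by rewrite eq_sym.
have eitherC y : either y = ((q \in y) || (p \in y))%:R by rewrite /either orbC.
apply: (@fails_implication_closest either [set p; q]).
  exact: (indicator_in_obl_or (u := either) (fun _ => erefl)).
rewrite in_or negb_or; apply/andP; split.
- by rewrite (indicator_in_obl_var (u := either) qp (fun _ => erefl)) !inE eqxx orbT.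
- by rewrite (indicator_in_obl_var pq eitherC) !inE eqxx.
Qed.

Lemma fails_obl_imp : fails_implication pi
  (Imp (Var p) (Var q)) (Imp (Obl v0 (Var p)) (Obl v0 (Var q))).
Proof.
apply: (@fails_implication_closest penalty set0).
  by rewrite in_imp in_var inE.
rewrite in_imp negb_or negbK; apply/andP; split.
- by rewrite penalty_in_obl_p inE.
- exact: penalty_notin_obl_q.
Qed.

Lemma fails_obl_and : fails_implication pi
  (Obl v0 (Var p)) (Obl v0 (And (Var p) (Var q))).
Proof.
apply: (@fails_implication_closest penalty set0); last exact: penalty_notin_obl_and.
by rewrite penalty_in_obl_p inE.
Qed.

Lemma fails_perm_and : fails_implication pi
  (Perm v0 (Var p)) (Perm v0 (And (Var p) (Var q))).
Proof.
apply: (@fails_implication_closest penalty set0); last exact: penalty_notin_perm_and.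
by rewrite penalty_in_perm_p inE.
Qed.

Lemma fails_cond_connex :
  fails_validity pi (Or (Cond v0 (Var p) (Var q)) (Cond v0 (Var q) (Var p))).
Proof.
apply: (@fails_validity_closest (fun _ => 0) set0).
by rewrite in_or negb_or; apply/andP; split; exact: notin_strict_const.
Qed.

Lemma fails_obl_or_left : fails_implication pi
  (Obl v0 (Or (Var p) (Var q))) (Obl v0 (Var p)).
Proof.
apply: (@fails_implication_closest either [set p; q]).
  exact: (indicator_in_obl_or (u := either) (fun _ => erefl)).
by rewrite (indicator_in_obl_var (u := either) qp (fun _ => erefl)) !inE eqxx orbT.
Qed.

Lemma fails_obl_factive : fails_implication pi (Obl v0 (Var p)) (Var p).
Proof.
apply: (@fails_implication_closest (fun y => (p \in y)%:R) set0).
  apply: obl_of_indicator; first by case: closest_ok.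
  - by move=> y; rewrite in_var.
  - exact: var_neq0.
  - exact: negvar_neq0.
by rewrite in_var inE.
Qed.

Lemma fails_perm_obl : fails_implication pi
  (Perm v0 (Var p)) (Perm v0 (Obl v0 (Var p))).
Proof.
apply: (@fails_implication_closest either set0).
  exact: (indicator_in_perm_var (u := either) qp (fun _ => erefl)).
exact: (indicator_notin_perm_obl (u := either) qp (fun _ => erefl)).
Qed.

Lemma fails_obl_pref : fails_implication pi
  (And (Strict (Neg (Var q)) (Neg (Var p))) (Obl v0 (Var p))) (Obl v0 (Var q)).
Proof.
apply: (@fails_implication_closest penalty [set p]); last exact: penalty_notin_obl_q.
rewrite in_and; apply/andP; split.
- by rewrite penalty_in_pref_negq_negp inE eqxx.
- by rewrite penalty_in_obl_p inE (negbTE qp).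
Qed.

End Countermodels.
End ClosestSelection.

Theorem proposition5p6 (R : realType) (PROPS : finType) (v0 p q : PROPS)
  (pi : PROPS -> R) :
  p <> q -> weighting pi ->
  let O := Obl v0 in let P := Perm v0 in let C := Cond v0 in
  let fi := fails_implication pi in
     fi (And (P (Var p)) (P (Var q))) (P (And (Var p) (Var q))) /\
      fi (O (Or (Var p) (Var q))) (Or (O (Var p)) (O (Var q))) /\
      fi (Imp (Var p) (Var q)) (Imp (O (Var p)) (O (Var q))) /\
      fi (O (Var p)) (O (And (Var p) (Var q))) /\
      fi (P (Var p)) (P (And (Var p) (Var q))) /\
      fails_validity pi (Or (C (Var p) (Var q)) (C (Var q) (Var p))) /\
      fi (O (Or (Var p) (Var q))) (O (Var p)) /\
      fi (O (Var p)) (Var p) /\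
      fi (P (Var p)) (P (O (Var p))) /\
      fi (And (Strict (Neg (Var q)) (Neg (Var p))) (O (Var p))) (O (Var q)).
Proof.
move=> pq pi_gt0; have qp : q != p by apply/eqP => qp; apply: pq.
split; first exact: fails_perm_conj.
split; first exact: fails_obl_or_split.
split; first exact: fails_obl_imp.
split; first exact: fails_obl_and.
split; first exact: fails_perm_and.
split; first exact: fails_cond_connex.
split; first exact: fails_obl_or_left.
split; first exact: (fails_obl_factive pi_gt0 v0 p).
split; first exact: (fails_perm_obl pi_gt0 v0 qp).
exact: fails_obl_pref.
Qed.
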